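(* Let $P$ be a tree poset of height $h$ and $x\in P$, let $\varepsilon>0$, and suppose $\delta>0$ is such that for every sufficiently large $n$, every family $\mathcal F\subseteq 2^{[n]}$ with $|\mathcal F|\ge(h-1+\varepsilon)\binom{n}{\lfloor n/2\rfloor}$ contains a copy of $P(x,\delta n)$. Then for every sufficiently large $n$ there exists a function $$f:\binom{2^{[n]}}{\le |P|2^n/\delta n}\to\binom{2^{[n]}}{\le (h-1+\varepsilon)\binom{n}{\lfloor n/2\rfloor}}$$ such that for every $P$-free family $\mathcal F\subseteq 2^{[n]}$ there is a subfamily $\mathcal H\subseteq\mathcal F$ with $\mathcal H\in\binom{2^{[n]}}{\le|P|2^n/\delta n}$ and $\mathcal F\subseteq\mathcal H\cup f(\mathcal H)$.
   Context: For a set $S$ and $t\ge0$, $\binom{S}{\le t}$ denotes the set of all subsets of $S$ of size at most $t$; thus $\binom{2^{[n]}}{\le t}$ is the set of all families of subsets of $[n]$ with at most $t$ members. Posets are finite collections of finite sets ordered by inclusion. A poset homomorphism $\phi:P\to Q$ is a map with $A\subseteq B\Rightarrow \phi(A)\subseteq\phi(B)$; $Q$ contains a copy of $P$ if there is an injective poset homomorphism $P\to Q$, and is $P$-free otherwise. The Hasse diagram of $P$ is the directed graph on $P$ with an edge $A\to B$ when $A\subsetneq B$ and no $C\in P$ has $A\subsetneq C\subsetneq B$; the undirected Hasse diagram forgets orientations. A tree poset is a poset whose undirected Hasse diagram is a tree. The height is the number of elements of a longest chain. For a tree poset $P$, $x\in P$ and an integer $d\ge2$, the $d$-blow-up $P(x,d)$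 rooted at $x$ is the tree poset whose Hasse diagram is obtained as follows: each $u\in P$ at distance $\rho$ from $x$ is replaced by $d^{\rho}$ elements $u^1,\dots,u^{d^\rho}$; for each edge $uv$ of the Hasse diagram with $v$ at distance $\rho-1$ from $x$ (and $u$ at distance $\rho$), the $u^i$ are partitioned into $d^{\rho-1}$ disjoint sets $U^1,\dots,U^{d^{\rho-1}}$ of size $d$ and $v^j$ is joined to every element of $U^j$, with the same orientation as $uv$. Non-integer quantities such as $\delta n$ are rounded down. *)

From mathcomp Require Import all_boot all_order all_algebra.
From Stdlib Require Import Relations.
From mathcomp Require Import reals.
Set Implicit Arguments. Unset Strict Implicit. Unset Printing Implicit Defensive.
Import Order.TTheory GRing.Theory Num.Theory.

Section PosetDefs.
Variable m : nat.
Notation S := {set 'I_m}.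
Variable P : {set S}.

Definition hasse : rel S := fun A B =>
  [&& A \in P, B \in P, A \proper B &
      [forall C : S, ~~ [&& C \in P, A \proper C & C \proper B]]].

Definition uhasse : rel S := fun A B => hasse A B || hasse B A.

Definition tree_poset : Prop :=
  [/\ P != set0,
      (forall A B, A \in P -> B \in P -> connect uhasse A B) &
      ~ (exists c : seq S, [&& uniq c, 2 < size c & cycle uhasse c])].

Definition is_chain (C : {set S}) : bool :=
  [forall A in C, forall B in C, (A \subset B) || (B \subset A)].

Definition height : nat :=
  \max_(C : {set S} | (C \subset P) && is_chain C) #|C|.

Definition hdist (x u : S) (k : nat) : Prop :=
  (exists s : seq S, [/\ size s = k, path uhasse x s & last x s = u]) /\
  (forall s : seq S, path uhasse x s -> last x s = u -> k <= size s).

(* d-blow-up P(x,d): element (u,i) stands for u^{i+1}, 0 <= i < d^dist(x,u) *)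
Definition bl_elem (x : S) (d : nat) (a : S * nat) : Prop :=
  exists k, hdist x a.1 k /\ a.2 < d ^ k.

(* directed Hasse edge a -> b of P(x,d); the partition of the u^i into blocks
   of size d is taken canonically: block j = {i | i %/ d = j} *)
Definition bl_edge (x : S) (d : nat) (a b : S * nat) : Prop :=
  [/\ bl_elem x d a, bl_elem x d b, hasse a.1 b.1 &
      exists k,
        (hdist x a.1 k.+1 /\ hdist x b.1 k /\ b.2 = a.2 %/ d) \/
        (hdist x b.1 k.+1 /\ hdist x a.1 k /\ a.2 = b.2 %/ d)].

Definition bl_le (x : S) (d : nat) : relation (S * nat) :=
  clos_refl_trans _ (bl_edge x d).

Variable n : nat.

Definition contains_poset (F : {set {set 'I_n}}) : Prop :=
  exists g : S -> {set 'I_n},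
    [/\ (forall A, A \in P -> g A \in F),
        (forall A B, A \in P -> B \in P -> g A = g B -> A = B) &
        (forall A B, A \in P -> B \in P -> A \subset B -> g A \subset g B)].

Definition contains_blowup (F : {set {set 'I_n}}) (x : S) (d : nat) : Prop :=
  exists g : S * nat -> {set 'I_n},
    [/\ (forall a, bl_elem x d a -> g a \in F),
        (forall a b, bl_elem x d a -> bl_elem x d b -> g a = g b -> a = b) &
        (forall a b, bl_le x d a b -> g a \subset g b)].

End PosetDefs.

From mathcomp Require Import all_boot all_order all_algebra.
From mathcomp Require Import reals.
From Stdlib Require Import Relations ClassicalEpsilon.
From mathcomp Require Import zify.
Import Order.TTheory GRing.Theory Num.Theory.
Set Implicit Arguments. Unset Strict Implicit. Unset Printing Implicit Defensive.

(* Start from A = 2^[n].  As long as A is large it contains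
   a copy of the blow-up P(x, d), d = floor(delta n); search it for a copy of P
   inside F by descending from x^0 and, for each vertex u, testing the d
   children of the copy found for the parent of u until one lies in F.  As F is
   P-free, either x^0 is not in F or the search gets stuck at some vertex, all
   of whose d tested children lie outside F; either way at most |P| of the
   tested sets lie in F, and if there is one, more than d sets were tested.
   Remove the tested sets from A and add those in F to H: then
   |H| delta n <= |P| 2^n.  The run only depends on the answers of F to the
   tests, which H records, so the final A is a function f(H), and it contains
   every set of F not in H. *)

Lemma eq_find_prefix (T : eqType) (p1 p2 : pred T) s :
  {in take (find p1 s).+1 s, p1 =1 p2} -> find p1 s = find p2 s.
Proof.
elim: s => //= y s IH eq_p; rewrite -(eq_p y) ?mem_head //.
case: ifP => // p1y; congr _.+1; apply: IH => z z_s.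
by apply: eq_p; rewrite /= p1y inE z_s orbT.
Qed.

Lemma child_index_lt d k i c : i < d ^ k -> c < d -> d * i + c < d ^ k.+1.
Proof.
move=> lt_i lt_c; rewrite expnS; apply: (@leq_trans (d * i.+1)).
  by rewrite mulnS addnC ltn_add2r.
by rewrite leq_mul2l lt_i orbT.
Qed.

Definition is_blowup_copy m (P : {set {set 'I_m}}) x d n
    (A : {set {set 'I_n}}) (g : {set 'I_m} * nat -> {set 'I_n}) :=
  [/\ forall a, bl_elem P x d a -> g a \in A,
      forall a b, bl_elem P x d a -> bl_elem P x d b -> g a = g b -> a = b &
      forall a b, bl_le P x d a b -> g a \subset g b].

Section HasseDiagram.
Variables (m : nat) (P : {set {set 'I_m}}).
Local Notation S := {set 'I_m}.
Local Notation adj := (uhasse P).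

Lemma uhasse_sym A B : adj A B = adj B A.
Proof. by rewrite /uhasse orbC. Qed.

Lemma uhasse_irr A : adj A A = false.
Proof. by rewrite /uhasse /hasse properxx !andbF. Qed.

Lemma uhasse_mem A B : adj A B -> (A \in P) && (B \in P).
Proof. by case/orP => /and4P[-> -> _ _]. Qed.

Lemma hasse_rt_of_subset A B :
  A \in P -> B \in P -> A \subset B -> clos_refl_trans S (hasse P) A B.
Proof.
have [k] := ubnP (#|B| - #|A|); elim: k => // k IH in A B *.
move=> lt_k PA PB sAB; have [<-|neAB] := eqVneq A B; first exact: rt_refl.
have ltAB : A \proper B by rewrite properEneq neAB.
case hAB: (hasse P A B); first exact: rt_step.
move: hAB; rewrite /hasse PA PB ltAB /= => /negbT /forallPn[C].
rewrite negbK => /and3P[PC ltAC ltCB].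
have := proper_card ltAC; have := proper_card ltCB => ltC ltA.
by apply: (rt_trans _ _ _ C); apply: IH; rewrite ?proper_sub //; lia.
Qed.

Section Distance.
Variable x : S.

Definition walks_ge k u :=
  forall s, path adj x s -> last x s = u -> k <= size s.

Lemma hdist_walks_ge u k : hdist P x u k -> walks_ge k u.
Proof. by case. Qed.

Lemma hdist_uniq u k k' : hdist P x u k -> hdist P x u k' -> k = k'.
Proof.
move=> [[s [<- ps ls]] ge_k] [[s' [<- ps' ls']] ge_k'].
by apply/eqP; rewrite eqn_leq ge_k ?ge_k'.
Qed.

Lemma hdist_root : hdist P x x 0.
Proof. by split; first exists [::]. Qed.

Lemma hdist0 u : hdist P x u 0 -> u = x.
Proof. by case=> -[[|? ?] [// _ <-]]. Qed.

Lemma hdist_pred u k : hdist P x u k.+1 -> exists2 v, adj v u & hdist P x v k.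
Proof.
case=> -[s [size_s ps ls]] ge_k; case/lastP: s size_s ps ls => // s v.
rewrite rcons_path size_rcons last_rcons => -[size_s] /andP[ps adj_v] eq_v.
rewrite -{}eq_v in ge_k *; exists (last x s) => //; split; first by exists s.
move=> t pt lt; have := ge_k (rcons t v).
by rewrite rcons_path pt lt adj_v last_rcons size_rcons ltnS; apply.
Qed.

Lemma hdist_adj_le u v k j :
  adj v u -> hdist P x v k -> hdist P x u j -> j <= k.+1.
Proof.
move=> adj_vu [[s [<- ps ls]] _] [_ ge_j].
by have := ge_j (rcons s u); rewrite rcons_path ps ls adj_vu last_rcons size_rcons; apply.
Qed.

Lemma hdist_exists u : connect adj x u -> exists k, hdist P x u k.
Proof.
move=> /connectP[s0 ps0 ls0].
pose walk k := [exists t : k.-tuple S, path adj x t && (last x t == u)].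
have walk_s0 : exists k, walk k.
  by exists (size s0); apply/existsP; exists (in_tuple s0); rewrite ps0 -ls0 eqxx.
exists (ex_minn walk_s0); case: ex_minnP => k /existsP[t /andP[pt /eqP lt]] min_k.
split; first by exists t; rewrite size_tuple.
move=> s ps ls; apply: min_k; apply/existsP; exists (in_tuple s).
by rewrite ps ls eqxx.
Qed.

Definition dist u : nat := epsilon (inhabits 0) (hdist P x u).

Lemma hdist_dist u : connect adj x u -> hdist P x u (dist u).
Proof. by move/hdist_exists; apply: epsilon_spec. Qed.

Lemma dist_root : dist x = 0.
Proof. exact: hdist_uniq (hdist_dist (connect0 _ _)) hdist_root. Qed.

Section Tree.
Hypothesis acyclic :
  ~ (exists c : seq S, [&& uniq c, 2 < size c & cycle adj c]).

(* Walking down geodesics from both ends, either they meet, closing a cycle,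
   or the path extends to one between two vertices one level closer to x. *)
Lemma no_path_at_level k c1 c2 r :
  c1 != c2 -> hdist P x c1 k -> hdist P x c2 k ->
  path adj c1 r -> last c1 r = c2 -> uniq (c1 :: r) ->
  {in c1 :: r, forall y, walks_ge k y} -> False.
Proof.
elim: k c1 c2 r => [|k IH] c1 c2 r ne12 d1 d2 pr lr ur ge_r.
  by move: ne12; rewrite (hdist0 d1) (hdist0 d2) eqxx.
have [p1 adj1 dp1] := hdist_pred d1; have [p2 adj2 dp2] := hdist_pred d2.
have notin_r z : hdist P x z k -> z \notin c1 :: r.
  case=> -[s [size_s ps ls]] _; apply/negP => /ge_r/(_ s ps ls).
  by rewrite size_s ltnn.
have ne_r : r != [::] by case: r lr {pr ur ge_r notin_r} => //= eq1; rewrite eq1 eqxx in ne12.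
have [eq12|ne_p] := eqVneq p1 p2.
  apply: acyclic; exists (p1 :: c1 :: r).
  rewrite /= -/(uniq (c1 :: r)) (negbTE (notin_r _ dp1)) ur.
  by rewrite !ltnS lt0n size_eq0 ne_r adj1 rcons_path pr lr eq12 uhasse_sym adj2.
apply: (IH p1 p2 (c1 :: rcons r p2)) => //.
- by rewrite /= rcons_path pr lr adj1 uhasse_sym adj2.
- by rewrite /= last_rcons.
- have := notin_r _ dp1; have := notin_r _ dp2; rewrite !inE.
  case/norP=> ne2c n2r /norP[ne1c n1r]; move: ur => /= /andP[c1r ur].
  rewrite !inE mem_rcons !inE rcons_uniq !negb_or ne1c ne_p n1r ur mem_rcons inE.
  by rewrite negb_or eq_sym ne2c c1r n2r.
- move=> y; rewrite !inE mem_rcons !inE => /or4P[/eqP->|/eqP->|/eqP->|yr].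
  + exact: hdist_walks_ge dp1.
  + by move=> s ps ls; apply/ltnW/(ge_r c1 (mem_head _ _) s ps ls).
  + exact: hdist_walks_ge dp2.
  + by move=> s ps ls; apply/ltnW/(ge_r y _ s ps ls); rewrite inE yr orbT.
Qed.

Lemma hdist_adj u v a b :
  adj u v -> hdist P x u a -> hdist P x v b -> a = b.+1 \/ b = a.+1.
Proof.
move=> adj_uv du dv; have le_ba := hdist_adj_le adj_uv du dv.
rewrite uhasse_sym in adj_uv; have le_ab := hdist_adj_le adj_uv dv du.
case: (ltngtP a b) => [lt_ab|lt_ba|eq_ab]; [right|left|exfalso]; try lia.
have ne_uv : u != v by apply: contraTneq adj_uv => ->; rewrite uhasse_irr.
rewrite -{}eq_ab in dv; apply: (no_path_at_level ne_uv du dv (r := [:: v])) => //=.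
- by rewrite uhasse_sym adj_uv.
- by rewrite inE ne_uv.
- by move=> y; rewrite !inE => /orP[]/eqP->; apply: hdist_walks_ge.
Qed.

Lemma hdist_parent_uniq u v w k :
  adj v u -> adj w u -> hdist P x v k -> hdist P x w k -> hdist P x u k.+1 ->
  v = w.
Proof.
move=> adj_v adj_w dv dw du; apply/eqP/negPn/negP => ne_vw.
have ne_u z : hdist P x z k -> z != u.
  by move=> dz; apply/eqP => eq_z; rewrite eq_z in dz; have := hdist_uniq du dz; lia.
apply: (no_path_at_level ne_vw dv dw (r := [:: u; w])) => //=.
- by rewrite adj_v uhasse_sym adj_w.
- by rewrite !inE negb_or ne_u // ne_vw eq_sym ne_u.
- move=> y; rewrite !inE => /or3P[]/eqP->; try exact: hdist_walks_ge.
  by move=> s ps ls; apply/ltnW/(hdist_walks_ge du ps ls).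
Qed.

Hypothesis connected : forall u, u \in P -> connect adj x u.
Hypothesis xP : x \in P.

Lemma dist_hdist u : u \in P -> hdist P x u (dist u).
Proof. by move/connected/hdist_dist. Qed.

Lemma dist_eq0 u : u \in P -> dist u = 0 -> u = x.
Proof. by move/dist_hdist => + du0; rewrite du0 => /hdist0. Qed.

Lemma dist_adj u v :
  u \in P -> v \in P -> adj u v ->
  dist u = (dist v).+1 \/ dist v = (dist u).+1.
Proof. by move=> /dist_hdist du /dist_hdist dv /hdist_adj; apply. Qed.

Definition parent u := odflt x [pick v | adj v u && ((dist v).+1 == dist u)].

Lemma parentP u k : u \in P -> dist u = k.+1 ->
  [/\ parent u \in P, adj (parent u) u & dist (parent u) = k].
Proof.
move=> Pu du; have := dist_hdist Pu; rewrite du => /hdist_pred[v adj_v dv].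
have /andP[Pv _] := uhasse_mem adj_v.
have dvk : dist v = k by apply: hdist_uniq (dist_hdist Pv) dv.
rewrite /parent; case: pickP => [w /andP[adj_w /eqP]|/(_ v)]; last first.
  by rewrite adj_v dvk du eqxx.
by rewrite du => -[dw]; have /andP[Pw _] := uhasse_mem adj_w.
Qed.

Lemma parent_eq u v : u \in P -> v \in P -> adj v u ->
  dist u = (dist v).+1 -> parent u = v.
Proof.
move=> Pu Pv adj_v du; have [Pp adj_p dp] := parentP Pu du.
have := dist_hdist Pp; rewrite dp => dp'.
by apply: (hdist_parent_uniq adj_p adj_v dp' (dist_hdist Pv)); rewrite -du; apply: dist_hdist.
Qed.

Section Search.
Variables (n d : nat) (g : S * nat -> {set 'I_n}) (F : {set {set 'I_n}}).

Definition first_hit u b := find (fun c => g (u, b + c) \in F) (iota 0 d).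

(* The search for a copy of P in F inside the image of the blow-up under g:
   starting from x^0, a vertex u whose parent was found as v^j is looked for
   among u^(d j), ..., u^(d j + d - 1), the children of v^j, and the first one
   whose image lies in F is taken.  [probe k u] is the index of the copy of u
   found ([None] if the search got stuck), and [queried u] lists the children
   tested for u. *)
Fixpoint probe k u : option nat :=
  if k is k'.+1 then
    if probe k' (parent u) is Some i then
      if first_hit u (d * i) < d then Some (d * i + first_hit u (d * i)) else None
    else None
  else if g (u, 0) \in F then Some 0 else None.

Definition queried u : seq {set 'I_n} :=
  if dist u is k.+1 then
    if probe k (parent u) is Some i then
      [seq g (u, d * i + c) | c <- take (first_hit u (d * i)).+1 (iota 0 d)]
    else [::]
  else [::].

Definition queries : {set {set 'I_n}} :=
  g (x, 0) |: \bigcup_(u in P) [set y in queried u].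

Lemma first_hit_le u b : first_hit u b <= d.
Proof. by rewrite -[leqRHS](size_iota 0) find_size. Qed.

Lemma first_hit_in u b : first_hit u b < d -> g (u, b + first_hit u b) \in F.
Proof.
move=> lt_d; have has_hit : has (fun c => g (u, b + c) \in F) (iota 0 d).
  by rewrite has_find size_iota.
by have := nth_find 0 has_hit; rewrite nth_iota.
Qed.

Lemma before_first_hit u b c : c < first_hit u b -> g (u, b + c) \notin F.
Proof.
move=> lt_c; have lt_d := leq_trans lt_c (first_hit_le u b).
by have := before_find 0 lt_c; rewrite nth_iota // => ->.
Qed.

Lemma probe_in k u i : probe k u = Some i -> g (u, i) \in F.
Proof.
case: k => [|k] /=; first by case: ifP => // ? [<-].
by case: (probe k _) => // j; case: ifP => // /first_hit_in ? [<-].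
Qed.

Lemma probe_parent k u j :
  probe k.+1 u = Some j -> probe k (parent u) = Some (j %/ d).
Proof.
rewrite /=; case: (probe k _) => // i; case: ifP => // lt_d [<-].
set c := first_hit u (d * i) in lt_d *.
have d_gt0 : 0 < d by apply: leq_ltn_trans lt_d.
by rewrite mulnC divnMDl // divn_small ?addn0.
Qed.

Lemma probe_root k u i : u \in P -> dist u = k -> probe k u = Some i ->
  g (x, 0) \in F.
Proof.
elim: k => [|k IH] in u i *; first by move=> Pu /(dist_eq0 Pu) -> /=; case: ifP.
by move=> Pu /(parentP Pu)[Pp _ dp] /probe_parent/(IH _ _ Pp dp).
Qed.

Lemma probe_lt k u i : u \in P -> dist u = k -> probe k u = Some i -> i < d ^ k.
Proof.
elim: k => [|k IH] in u i *; first by move=> _ _ /=; case: ifP => // _ [<-].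
move=> Pu /(parentP Pu)[Pp _ dp] /=.
case E: (probe k _) => [j|] //; case: ifP => // lt_d [<-].
exact: child_index_lt (IH _ _ Pp dp E) lt_d.
Qed.

Lemma bl_elem_root : bl_elem P x d (x, 0).
Proof. by exists 0; split; [exact: hdist_root | rewrite expn0]. Qed.

Lemma bl_elem_child u k i c : u \in P -> dist u = k.+1 ->
  probe k (parent u) = Some i -> c < d -> bl_elem P x d (u, d * i + c).
Proof.
move=> Pu du pi lt_c; have [Pp _ dp] := parentP Pu du.
exists k.+1; split; first by rewrite -du; apply: dist_hdist.
exact: child_index_lt (probe_lt Pp dp pi) lt_c.
Qed.

Lemma probe_bl_elem u i : u \in P -> probe (dist u) u = Some i ->
  bl_elem P x d (u, i).
Proof. by move=> Pu pu; exists (dist u); split; [apply: dist_hdist | apply: probe_lt pu]. Qed.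

Lemma mem_queried u y : y \in queried u ->
  exists k i c, [/\ dist u = k.+1, probe k (parent u) = Some i,
                   c <= first_hit u (d * i), c < d & y = g (u, d * i + c)].
Proof.
rewrite /queried; case du: (dist u) => [|k] //; case pi: (probe k _) => [i|] //.
case/mapP=> c; rewrite take_iota mem_iota leq_min ltnS => /andP[_ /andP[le_c lt_c]] ->.
by exists k, i, c.
Qed.

Lemma queries_index y : y \in queries -> exists2 a, bl_elem P x d a & y = g a.
Proof.
rewrite /queries !inE => /orP[/eqP->|/bigcupP[u Pu]].
  by exists (x, 0); first exact: bl_elem_root.
rewrite inE => /mem_queried[k [i [c [du pi _ lt_c ->]]]].
by exists (u, d * i + c); first exact: bl_elem_child Pu du pi lt_c.
Qed.

Lemma queriesI_sub :
  queries :&: F \subset [set g (u, odflt 0 (probe (dist u) u)) | u in P].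
Proof.
apply/subsetP => y; rewrite /queries !inE => /andP[/orP[/eqP->|/bigcupP[u Pu qy]] Fy].
  by apply/imsetP; exists x; rewrite // dist_root /= Fy.
move: qy; rewrite inE => /mem_queried[k [i [c [du pi le_c lt_c eq_y]]]]; subst y.
have eq_c : c = first_hit u (d * i).
  by apply/eqP; rewrite eqn_leq le_c leqNgt; apply: contraL Fy; apply: before_first_hit.
by apply/imsetP; exists u; rewrite // du /= pi -eq_c lt_c.
Qed.

Lemma card_queriesI : #|queries :&: F| <= #|P|.
Proof. exact: leq_trans (subset_leq_card queriesI_sub) (leq_imset_card _ _). Qed.

Lemma queriesI_eq0 : g (x, 0) \notin F -> queries :&: F = set0.
Proof.
move=> Fx; apply/setP => y; rewrite /queries !inE; apply/negP.
case/andP=> /orP[/eqP->|/bigcupP[u Pu qy]] Fy; first by rewrite Fy in Fx.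
move: qy; rewrite inE => /mem_queried[k [i [_ [du pi _ _ _]]]].
by have [Pp _ dp] := parentP Pu du; rewrite (probe_root Pp dp pi) in Fx.
Qed.

Lemma probe_failure k u : g (x, 0) \in F -> u \in P -> dist u = k ->
  probe k u = None ->
  exists v k' i, [/\ v \in P, dist v = k'.+1, probe k' (parent v) = Some i
                   & first_hit v (d * i) = d].
Proof.
move=> Fx; elim: k => [|k IH] in u *; first by move=> Pu /(dist_eq0 Pu) -> /=; rewrite Fx.
move=> Pu du; have [Pp _ dp] := parentP Pu du.
rewrite /=; case pp: (probe k _) => [i|]; last by move=> _; apply: IH Pp dp pp.
case: ifP => // /negbT; rewrite -leqNgt => le_d _.
by exists u, k, i; split=> //; apply/eqP; rewrite eqn_leq first_hit_le.
Qed.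

Lemma probe_parent_index u v i j : u \in P -> v \in P -> adj v u ->
  dist u = (dist v).+1 -> probe (dist u) u = Some i -> probe (dist v) v = Some j ->
  j = i %/ d.
Proof.
move=> Pu Pv adj_vu du; rewrite du => /probe_parent.
by rewrite (parent_eq Pu Pv adj_vu du) => -> [].
Qed.

Lemma probe_bl_edge a b i j : hasse P a b ->
  probe (dist a) a = Some i -> probe (dist b) b = Some j ->
  bl_edge P x d (a, i) (b, j).
Proof.
move=> hab pa pb; have /and4P[Pa Pb _ _] := hab.
have adj_ab : adj a b by rewrite /uhasse hab.
split; [exact: probe_bl_elem | exact: probe_bl_elem | done |].
have [d_ab|d_ba] := dist_adj Pa Pb adj_ab.
- exists (dist b); left; split; first by rewrite -d_ab; apply: dist_hdist.
  split; first exact: dist_hdist.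
  by apply: probe_parent_index pa pb; rewrite // uhasse_sym.
- exists (dist a); right; split; first by rewrite -d_ba; apply: dist_hdist.
  by split; [apply: dist_hdist | apply: probe_parent_index pb pa].
Qed.

Section Copy.
Variable A : {set {set 'I_n}}.
Hypothesis g_copy : is_blowup_copy P x d A g.

Lemma queries_sub : queries \subset A.
Proof.
by case: g_copy => inA _ _; apply/subsetP => _ /queries_index[a /inA Aa ->].
Qed.

Lemma card_queries_miss u : g (x, 0) \in F -> u \in P ->
  probe (dist u) u = None -> d + #|queries :&: F| <= #|queries|.
Proof.
move=> Fx Pu /(probe_failure Fx Pu erefl)[v [k [i [Pv dv pi hit_d]]]].
have [_ g_inj _] := g_copy.
set block := [set y in queried v].
have q_v : queried v = [seq g (v, d * i + c) | c <- iota 0 d].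
  by rewrite /queried dv pi hit_d take_oversize // size_iota.
have card_block : #|block| = d.
  have uniq_q : uniq [seq g (v, d * i + c) | c <- iota 0 d].
    rewrite map_inj_in_uniq ?iota_uniq // => c c'.
    rewrite !mem_iota => /andP[_ lt_c] /andP[_ lt_c'].
    by move/g_inj => /(_ (bl_elem_child Pv dv pi lt_c) (bl_elem_child Pv dv pi lt_c')) [/addnI].
  by move/card_uniqP: uniq_q; rewrite cardsE q_v size_map size_iota.
have blockI : block :&: (queries :&: F) = set0.
  apply/setP => y; rewrite !inE q_v; apply/negP => /andP[/mapP[c c_in ->] /andP[_]].
  by move: c_in; rewrite mem_iota => /andP[_ lt_c]; apply/negP/before_first_hit; rewrite hit_d.
rewrite -card_block -cardsUI blockI cards0 addn0.
apply: subset_leq_card; rewrite subUset subsetIl andbT.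
by apply/subsetP => y qy; rewrite !inE; apply/orP; right; apply/bigcupP; exists v.
Qed.

Lemma probe_contains_poset :
  (forall u, u \in P -> probe (dist u) u != None) -> contains_poset P F.
Proof.
case: g_copy => _ g_inj g_mono found.
pose idx u := odflt 0 (probe (dist u) u).
have probe_idx u : u \in P -> probe (dist u) u = Some (idx u).
  by move/found; rewrite /idx; case: (probe _ _).
have le_idx a b : clos_refl_trans _ (hasse P) a b -> bl_le P x d (a, idx a) (b, idx b).
  elim=> [a' b' hab|a'|a' b' c' _ IH1 _ IH2]; last exact: rt_trans IH1 IH2; last exact: rt_refl.
  have /and4P[Pa Pb _ _] := hab.
  by apply: rt_step; apply: probe_bl_edge hab (probe_idx a' Pa) (probe_idx b' Pb).
exists (fun u => g (u, idx u)); split.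
- by move=> u /probe_idx /probe_in.
- move=> u v Pu Pv /g_inj.
  by case/(_ (probe_bl_elem Pu (probe_idx u Pu)) (probe_bl_elem Pv (probe_idx v Pv))).
- by move=> a b Pa Pb sab; apply/g_mono/le_idx/hasse_rt_of_subset.
Qed.

Lemma card_queriesI_mul :
  ~ contains_poset P F -> #|queries :&: F| * d.+1 <= #|P| * #|queries|.
Proof.
move=> Ffree; have [Fx|/queriesI_eq0->] := boolP (g (x, 0) \in F); last by rewrite cards0.
have [->//|pos_gt0] := posnP #|queries :&: F|.
case: (pickP (fun u => (u \in P) && (probe (dist u) u == None))); last first.
  move=> found; case: Ffree; apply: probe_contains_poset => u Pu.
  by have := found u; rewrite Pu => /negbT.
move=> u /andP[Pu /eqP miss]; apply: leq_mul card_queriesI _.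
by apply: leq_trans (card_queries_miss Fx Pu miss); rewrite -addn1 leq_add2l.
Qed.

End Copy.
End Search.

Section Agreement.
Variables (n d : nat) (g : S * nat -> {set 'I_n}) (F1 F2 : {set {set 'I_n}}).
Hypothesis agree : {in queries d g F1, forall t, (t \in F2) = (t \in F1)}.

Lemma first_hit_agree u k i : u \in P -> dist u = k.+1 ->
  probe d g F1 k (parent u) = Some i ->
  first_hit d g F2 u (d * i) = first_hit d g F1 u (d * i).
Proof.
move=> Pu du pi; apply/esym/eq_find_prefix => c c_in /=; apply/esym/agree.
rewrite /queries !inE; apply/orP; right; apply/bigcupP; exists u => //.
by rewrite inE /queried du pi; apply: map_f.
Qed.

Lemma probe_agree k u : u \in P -> dist u = k ->
  probe d g F2 k u = probe d g F1 k u.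
Proof.
elim: k => [|k IH] in u *.
  by move=> Pu /(dist_eq0 Pu) -> /=; rewrite agree // /queries !inE eqxx.
move=> Pu du; have [Pp _ dp] := parentP Pu du.
rewrite /= IH //; case pi: (probe _ _ _ k _) => [i|] //.
by rewrite (first_hit_agree Pu du pi).
Qed.

Lemma queries_agree : queries d g F2 = queries d g F1.
Proof.
congr (_ |: _); apply: eq_bigr => u Pu.
suff -> : queried d g F2 u = queried d g F1 u by [].
rewrite /queried; case du: (dist u) => [|k] //; have [Pp _ dp] := parentP Pu du.
rewrite probe_agree //; case pi: (probe _ _ _ k _) => [i|] //.
by rewrite (first_hit_agree Pu du pi).
Qed.

End Agreement.

Section Container.
Variables (n d : nat) (small : pred {set {set 'I_n}}).
Hypothesis large_copy : forall A, ~~ small A -> contains_blowup P A x d.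

Definition blowup_copy (A : {set {set 'I_n}}) : S * nat -> {set 'I_n} :=
  epsilon (inhabits (fun=> set0)) (is_blowup_copy P x d A).

Lemma blowup_copyP A : ~~ small A -> is_blowup_copy P x d A (blowup_copy A).
Proof. by move/large_copy; apply: epsilon_spec. Qed.

(* Returns the final family and the tested sets that lie in [F]; [k] bounds
   the number of rounds. *)
Fixpoint container (F : {set {set 'I_n}}) k A : {set {set 'I_n}} * {set {set 'I_n}} :=
  if k is k'.+1 then
    if small A then (A, set0) else
      let T := queries d (blowup_copy A) F in
      let r := container F k' (A :\: T) in (r.1, (T :&: F) :|: r.2)
  else (A, set0).

Lemma container_small (F A : {set {set 'I_n}}) k : #|A| < k -> small (container F k A).1.
Proof.
elim: k => [|k IH] // in A *; rewrite ltnS /= => le_A.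
case: ifP => //= /negbT /blowup_copyP copyA; apply: IH.
set T := queries d _ F; have [inA _ _] := copyA.
have Ax : blowup_copy A (x, 0) \in A by apply/inA/bl_elem_root.
have Tx : blowup_copy A (x, 0) \in T by rewrite /T /queries !inE eqxx.
apply: leq_trans le_A; apply: proper_card; apply/properP; split; first exact: subsetDl.
by exists (blowup_copy A (x, 0)); rewrite // inE Tx.
Qed.

Lemma container_sub (F A : {set {set 'I_n}}) k : (container F k A).2 \subset F.
Proof.
elim: k => [|k IH] /= in A *; first exact: sub0set.
by case: ifP => _; rewrite ?sub0set //= subUset IH subsetIr.
Qed.

Lemma container_cover (F A : {set {set 'I_n}}) k :
  F :&: A \subset (container F k A).2 :|: (container F k A).1.
Proof.
elim: k => [|k IH] /= in A *; first by rewrite set0U subsetIr.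
case: ifP => _ /=; first by rewrite set0U subsetIr.
set T := queries d _ F; apply/subsetP => y; rewrite inE => /andP[Fy Ay].
have [Ty|Tyn] := boolP (y \in T); first by rewrite !in_setU in_setI Ty Fy.
have /(subsetP (IH (A :\: T))) : y \in F :&: (A :\: T) by rewrite in_setI in_setD Tyn Fy Ay.
by rewrite !in_setU => /orP[]->; rewrite ?orbT.
Qed.

Lemma container_fingerprint (F H A : {set {set 'I_n}}) k :
  (container F k A).2 \subset H -> H \subset F -> container H k A = container F k A.
Proof.
elim: k => [|k IH] //= in A *; case: ifP => //= _.
set g := blowup_copy A; rewrite subUset => /andP[TFH subH] HF.
have agree : {in queries d g F, forall t, (t \in H) = (t \in F)}.
  move=> t Tt; apply/idP/idP => [/(subsetP HF)//|Ft].
  by apply: (subsetP TFH); rewrite inE Tt Ft.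
rewrite (queries_agree agree) IH //; congr (_, _ :|: _).
by apply/setP => t; rewrite !in_setI; have [/agree->|] := boolP (t \in queries d g F).
Qed.

Lemma container_count (F A : {set {set 'I_n}}) k : ~ contains_poset P F ->
  #|(container F k A).2| * d.+1 <= #|P| * #|A|.
Proof.
move=> Ffree; elim: k => [|k IH] /= in A *; first by rewrite cards0.
case: ifP => /= [_|/negbT /blowup_copyP copyA]; first by rewrite cards0.
set T := queries d _ F; have TA : T \subset A by apply: queries_sub copyA.
rewrite -(setIidPr TA) -(cardsID T A) (setIidPr TA) mulnDr.
apply: leq_trans (leq_add (card_queriesI_mul copyA Ffree) (IH (A :\: T))).
by rewrite -mulnDl leq_mul2r cardsU leq_subr orbT.
Qed.

End Container.

End Tree.
End Distance.
End HasseDiagram.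

Local Open Scope ring_scope.

Theorem lemma3p1 (R : realType) (m : nat) (P : {set {set 'I_m}})
    (x : {set 'I_m}) (eps delta : R) :
  tree_poset P -> x \in P -> 0 < eps -> 0 < delta ->
  (exists N : nat, forall n : nat, (N <= n)%N ->
     forall F : {set {set 'I_n}},
       ((height P)%:R - 1 + eps) * ('C(n, n./2))%:R <= (#|F|)%:R ->
       contains_blowup P F x (Num.truncn (delta * n%:R))) ->
  exists N : nat, forall n : nat, (N <= n)%N ->
    exists f : {set {set 'I_n}} -> {set {set 'I_n}},
      (forall H : {set {set 'I_n}},
          (#|H|)%:R <= (#|P|)%:R * 2 ^+ n / (delta * n%:R) ->
          (#|f H|)%:R <= ((height P)%:R - 1 + eps) * ('C(n, n./2))%:R) /\
      (forall F : {set {set 'I_n}}, ~ contains_poset P F ->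
         exists H : {set {set 'I_n}},
           [/\ H \subset F,
               (#|H|)%:R <= (#|P|)%:R * 2 ^+ n / (delta * n%:R) &
               F \subset H :|: f H]).
Proof.
move=> [_ connected acyclic] xP _ delta_gt0 [N blowupN].
have connected_x u : u \in P -> connect (uhasse P) x u by apply: connected.
exists (maxn N 1) => n; rewrite geq_max => /andP[le_N n_gt0].
set d := Num.truncn (delta * n%:R).
pose small (A : {set {set 'I_n}}) :=
  #|A|%:R < ((height P)%:R - 1 + eps) * ('C(n, n./2))%:R.
have large_copy A : ~~ small A -> contains_blowup P A x d.
  by rewrite -leNgt; apply: blowupN.
have dn_gt0 : 0 < delta * n%:R by rewrite mulr_gt0 // ltr0n.
pose rounds := #|{set 'I_n}|.+1.
pose run F := container P x d small F rounds setT.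
exists (fun H => (run H).1); split=> [H _|F Ffree].
  by apply: ltW; apply: (container_small large_copy); rewrite cardsT.
exists (run F).2; split; first exact: container_sub.
  have card_T : #|[set: {set 'I_n}]|%:R = 2 ^+ n :> R.
    by rewrite -powersetT card_powerset cardsT card_ord natrX.
  rewrite ler_pdivlMr // -card_T.
  apply: (@le_trans _ _ (#|(run F).2|%:R * d.+1%:R)).
    by rewrite ler_wpM2l // ltW // truncnS_gt.
  by rewrite -!natrM ler_nat (container_count acyclic connected_x xP large_copy).
have -> : run (run F).2 = run F.
  by apply: (container_fingerprint connected_x (subxx _)); apply: container_sub.
by have := container_cover P x d small F setT rounds; rewrite setIT.
Qed.
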